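(* Let $S=(N,M_0)$ be a live Petri net system. If the potential reachability graph of $S$ is initially directed, i.e. for every marking $M_1\in PR(S)$ there is a marking reachable both from $M_0$ and from $M_1$, then $S$ is strongly live, i.e. for every $M\in PR(S)$ the system $(N,M)$ is live.
   Context: A Petri net is $N=(P,T,W)$ with finite disjoint sets of places $P$ and transitions $T$ and weights $W:(P\times T)\cup(T\times P)\to\mathbb{N}$. A marking is a map $P\to\mathbb{N}$. A transition $t$ is enabled at $M$ if $M(p)\ge W(p,t)$ for all $p$; firing it yields $M+I[\cdot,t]$ where the incidence matrix is $I(p,t)=W(t,p)-W(p,t)$. Reachability from a marking means reachability by a finite sequence of successive firings. $PR(S)=\{M\in\mathbb{N}^{P} : \exists Y\in\mathbb{N}^{T},\ M=M_0+I\cdot Y\}$ is the set of potentially reachable markings. A system $(N,M)$ is live if for every transition $t$ and every marking $M'$ reachable from $M$, some marking reachable from $M'$ enables $t$. *)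

From HB Require Import structures.
From mathcomp Require Import all_boot all_order all_algebra.
Set Implicit Arguments. Unset Strict Implicit. Unset Printing Implicit Defensive.
Import Order.TTheory GRing.Theory Num.Theory.

(* A Petri net N = (P, T, W): finite places P, finite transitions T,
   weights split as pre-weights W(p,t) and post-weights W(t,p). *)
Record petri_net := PetriNet {
  place : finType;
  trans : finType;
  Wpre  : place -> trans -> nat;
  Wpost : trans -> place -> nat
}.

Definition marking (N : petri_net) := place N -> nat.

Definition incidence (N : petri_net) (p : place N) (t : trans N) : int :=
  ((@Wpost N t p)%:Z - (@Wpre N p t)%:Z)%R.

Definition enabled (N : petri_net) (M : marking N) (t : trans N) : Prop :=
  forall p, (@Wpre N p t <= M p)%N.

(* Marking obtained by firing t at M (meaningful when t is enabled):
   M + I[.,t]. *)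
Definition fire (N : petri_net) (M : marking N) (t : trans N) : marking N :=
  fun p => (M p - @Wpre N p t + @Wpost N t p)%N.

Definition step (N : petri_net) (M M' : marking N) : Prop :=
  exists t, enabled M t /\ (forall p, M' p = fire M t p).

Inductive reachable (N : petri_net) (M : marking N) : marking N -> Prop :=
| reach_refl : reachable M M
| reach_step : forall M1 M2, reachable M M1 -> step M1 M2 -> reachable M M2.

Definition PR (N : petri_net) (M0 : marking N) (M : marking N) : Prop :=
  exists Y : trans N -> nat,
    forall p, ((M p)%:Z = (M0 p)%:Z + \sum_(t : trans N) incidence p t * (Y t)%:Z)%R.

Definition live (N : petri_net) (M : marking N) : Prop :=
  forall (t : trans N) (M' : marking N), reachable M M' ->
    exists M'', reachable M' M'' /\ enabled M'' t.

Definition PR_initially_directed (N : petri_net) (M0 : marking N) : Prop :=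
  forall M1, PR M0 M1 -> exists M, reachable M0 M /\ reachable M1 M.

Definition strongly_live (N : petri_net) (M0 : marking N) : Prop :=
  forall M, PR M0 M -> live M.

From mathcomp Require Import all_boot all_order all_algebra.
From mathcomp Require Import zify.
Import Order.TTheory GRing.Theory Num.Theory.
Set Implicit Arguments. Unset Strict Implicit. Unset Printing Implicit Defensive.

(* Firing t adds the column I[.,t], so it keeps a marking in PR(S) (increment
   the count vector Y at t); hence every marking reachable from some M in PR(S)
   lies in PR(S).  Initial directedness then gives a marking reachable from both
   M0 and it, and liveness of M0 enables any transition from there. *)

Lemma reachable_trans (N : petri_net) (A B C : marking N) :
  reachable A B -> reachable B C -> reachable A C.
Proof.
move=> HAB; elim=> [|M1 M2 _ HAM1 HM12]; first exact: HAB.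
exact: reach_step HAM1 HM12.
Qed.

Local Open Scope ring_scope.

Lemma fire_incidence (N : petri_net) (M : marking N) (t : trans N) (p : place N) :
  enabled M t -> (fire M t p)%:Z = (M p)%:Z + incidence p t.
Proof. by move=> /(_ p) Hpre; rewrite /fire /incidence; lia. Qed.

Lemma sum_incidence_incr (N : petri_net) (Y : trans N -> nat) (t : trans N)
    (p : place N) :
  \sum_(s : trans N) incidence p s * (Y s + (s == t))%N%:Z =
  \sum_(s : trans N) incidence p s * (Y s)%:Z + incidence p t.
Proof.
under eq_bigr => s _ do rewrite PoszD mulrDr.
rewrite big_split /=; congr (_ + _).
by rewrite (bigD1 t) //= eqxx mulr1 big1 ?addr0 // => s /negPf ->; rewrite mulr0.
Qed.

Lemma PR_step (N : petri_net) (M0 M M' : marking N) :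
  PR M0 M -> step M M' -> PR M0 M'.
Proof.
case=> Y HY [t [Hen HM']].
exists (fun s => Y s + (s == t))%N => p.
by rewrite HM' fire_incidence // sum_incidence_incr HY [RHS]addrA.
Qed.

Lemma PR_reachable (N : petri_net) (M0 M M' : marking N) :
  PR M0 M -> reachable M M' -> PR M0 M'.
Proof. by move=> HM; elim=> // M1 M2 _ HM1 Hs; exact: PR_step HM1 Hs. Qed.

Theorem mainTheorem2 (N : petri_net) (M0 : marking N) :
  live M0 -> PR_initially_directed M0 -> strongly_live M0.
Proof.
move=> Hlive Hdir M HM t M' HMM'.
have [Mc [H0c H'c]] := Hdir M' (PR_reachable HM HMM').
have [M'' [HcM'' Hen]] := Hlive t Mc H0c.
by exists M''; split => //; exact: reachable_trans H'c HcM''.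
Qed.
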